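(* There is a universal constant $K$ such that for every network $G(V)$ with $|V|\ge2$, writing $\gamma_2=\gamma_2(V,\sqrt{R_{\mathrm{eff}}})$, for all $u\ge16$, $$\sum_{v\in V}e^{-u\,c_v\,\gamma_2^2}\le K\,e^{-u/8}.$$
   Context: A network is a finite connected graph $G=(V,E)$ with symmetric conductances $c_{xy}\ge0$, $c_{xy}>0$ iff $xy\in E$; $c_v=\sum_yc_{vy}$; $R_{\mathrm{eff}}$ is effective resistance and $\sqrt{R_{\mathrm{eff}}}$ is the metric $(x,y)\mapsto\sqrt{R_{\mathrm{eff}}(x,y)}$. Talagrand's functional: with $M_0=1$, $M_k=2^{2^k}$, an admissible sequence is a nested sequence of partitions $\{\mathcal A_k\}_{k\ge0}$ ($\mathcal A_{k+1}$ refines $\mathcal A_k$) with $|\mathcal A_k|\le M_k$; $\gamma_2(X,d)=\inf\sup_{x}\sum_{k\ge0}2^{k/2}\mathrm{diam}(A_k(x))$ over admissible sequences, $A_k(x)$ the block of $\mathcal A_k$ containing $x$. *)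

(* classical reals. Vertices of a network are 0,...,n-1. *)
From Stdlib Require Import Reals Lra List Arith ClassicalEpsilon.
Import ListNotations.
Open Scope R_scope.

Definition sumV (n : nat) (f : nat -> R) : R :=
  fold_right Rplus 0 (map f (seq 0 n)).

Inductive reach (n : nat) (c : nat -> nat -> R) : nat -> nat -> Prop :=
| reach_refl x : reach n c x x
| reach_step x z y : (z < n)%nat -> c x z > 0 -> reach n c z y -> reach n c x y.

Definition network (n : nat) (c : nat -> nat -> R) : Prop :=
  (forall x y, (x < n)%nat -> (y < n)%nat -> c x y = c y x) /\
  (forall x y, (x < n)%nat -> (y < n)%nat -> 0 <= c x y) /\
  (forall x, (x < n)%nat -> c x x = 0) /\
  (forall x y, (x < n)%nat -> (y < n)%nat -> reach n c x y).

Definition cvert (n : nat) (c : nat -> nat -> R) (v : nat) : R :=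
  sumV n (fun y => c v y).

(* r is the effective resistance between x and y: the voltage drop
   phi x - phi y of a potential phi driving a unit current from x to y,
   i.e. sum_w c_vw (phi v - phi w) = 1_{v=x} - 1_{v=y} for all v in V. *)
Definition is_Reff (n : nat) (c : nat -> nat -> R) (x y : nat) (r : R) : Prop :=
  exists phi : nat -> R,
    (forall v, (v < n)%nat ->
       sumV n (fun w => c v w * (phi v - phi w)) =
       (if Nat.eqb v x then 1 else 0) - (if Nat.eqb v y then 1 else 0)) /\
    r = phi x - phi y.

Definition Reff (n : nat) (c : nat -> nat -> R) (x y : nat) : R :=
  epsilon (inhabits 0) (is_Reff n c x y).

Definition dist_sqrtReff (n : nat) (c : nat -> nat -> R) (x y : nat) : R :=
  sqrt (Reff n c x y).

Definition Mk (k : nat) : nat :=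
  match k with O => 1%nat | _ => (2 ^ (2 ^ k))%nat end.

(* A partition of V is encoded by a block-labelling P : nat -> nat
   (x, y in V lie in the same block iff P x = P y).
   A sequence of partitions is P : nat -> nat -> nat (P k = A_k). *)
Definition num_blocks (n : nat) (Q : nat -> nat) : nat :=
  length (nodup Nat.eq_dec (map Q (seq 0 n))).

Definition admissible (n : nat) (P : nat -> nat -> nat) : Prop :=
  (forall k, (num_blocks n (P k) <= Mk k)%nat) /\
  (forall k x y, (x < n)%nat -> (y < n)%nat ->
     P (S k) x = P (S k) y -> P k x = P k y).

Definition block (n : nat) (Q : nat -> nat) (x : nat) : list nat :=
  filter (fun y => Nat.eqb (Q y) (Q x)) (seq 0 n).

Definition diam (d : nat -> nat -> R) (B : list nat) : R :=
  fold_right Rmax 0 (map (fun p => d (fst p) (snd p)) (list_prod B B)).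

Definition gamma_partial (n : nat) (d : nat -> nat -> R)
    (P : nat -> nat -> nat) (x N : nat) : R :=
  fold_right Rplus 0
    (map (fun k => Rpower 2 (INR k / 2) * diam d (block n (P k) x)) (seq 0 (S N))).

(* t bounds sup_x sum_{k>=0} 2^{k/2} diam(A_k(x)) for some admissible sequence *)
Definition gamma2_bounds (n : nat) (d : nat -> nat -> R) (t : R) : Prop :=
  exists P, admissible n P /\
    forall x N, (x < n)%nat -> gamma_partial n d P x N <= t.

Definition is_glb (E : R -> Prop) (m : R) : Prop :=
  (forall t, E t -> m <= t) /\ (forall b, (forall t, E t -> b <= t) -> b <= m).

Definition gamma2 (n : nat) (d : nat -> nat -> R) : R :=
  epsilon (inhabits 0) (is_glb (gamma2_bounds n d)).

(** Write [x v = c_v γ₂²] for the metric [√R_eff].  First, [x v >= 1]: the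
    single block of [A_0] contains [v] and any [w <> v], so
    [γ₂² >= R_eff(v,w) >= 1/c_v], the last inequality by the minimum principle
    for the potential of a unit current from [v] to [w].  Second, at most
    [M_(k+1)] vertices have [x v <= 2^k]: two of them in a common block of
    [A_(k+1)] would give [2^(k+1) R_eff(v,w) >= 2^(k+1)/c_v >= 2 γ₂²], i.e. a
    cost [>= √2 γ₂ > γ₂], so they occupy distinct blocks.  Grouping the vertices
    by dyadic level,
    [Σ_v e^(-u x v) <= Σ_k M_(k+1) e^(-u 2^(k-1)) = Σ_k (4 e^(-u/2))^(2^k) <= 8 e^(-u/2)].
    Effective resistances exist because the Kron reduction of a connected
    network at a vertex is again a connected network, so Laplacian systems with
    zero total source are solvable by induction on the number of vertices. *)

From Stdlib Require Import Reals Lra Lia List ClassicalEpsilon Classical.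
Import ListNotations.
Open Scope R_scope.

Definition lsum (L : list nat) (f : nat -> R) : R := fold_right Rplus 0 (map f L).

Lemma sumV_lsum n f : sumV n f = lsum (seq 0 n) f.
Proof. reflexivity. Qed.

Lemma lsum_app L1 L2 f : lsum (L1 ++ L2) f = lsum L1 f + lsum L2 f.
Proof. unfold lsum; induction L1; simpl; [lra|]. rewrite IHL1; lra. Qed.

Lemma sumV_S m f : sumV (S m) f = sumV m f + f m.
Proof. rewrite !sumV_lsum, seq_S, lsum_app. unfold lsum; simpl. lra. Qed.

Lemma lsum_ext L f g : (forall x, In x L -> f x = g x) -> lsum L f = lsum L g.
Proof.
  unfold lsum; induction L; simpl; intros H; auto.
  rewrite H, IHL; auto.
Qed.

Lemma lsum_le L f g : (forall x, In x L -> f x <= g x) -> lsum L f <= lsum L g.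
Proof.
  unfold lsum; induction L; simpl; intros H; [lra|].
  apply Rplus_le_compat; auto.
Qed.

Lemma lsum_plus L f g : lsum L (fun x => f x + g x) = lsum L f + lsum L g.
Proof. unfold lsum; induction L; simpl; [lra|]. rewrite IHL; lra. Qed.

Lemma lsum_minus L f g : lsum L (fun x => f x - g x) = lsum L f - lsum L g.
Proof. unfold lsum; induction L; simpl; [lra|]. rewrite IHL; lra. Qed.

Lemma lsum_scal L k f : lsum L (fun x => k * f x) = k * lsum L f.
Proof. unfold lsum; induction L; simpl; [lra|]. rewrite IHL; lra. Qed.

Lemma lsum_nonneg L f : (forall x, In x L -> 0 <= f x) -> 0 <= lsum L f.
Proof.
  unfold lsum; induction L; simpl; intros H; [lra|].
  apply Rplus_le_le_0_compat; auto.
Qed.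

Lemma lsum_ge_term L f a : (forall x, In x L -> 0 <= f x) -> In a L -> f a <= lsum L f.
Proof.
  intros H Ha; induction L as [|b L IH]; [destruct Ha|].
  assert (Hb : 0 <= f b) by (apply H; left; auto).
  assert (HL : 0 <= lsum L f) by (apply lsum_nonneg; intros; apply H; right; auto).
  unfold lsum in *; simpl in *.
  destruct Ha as [<-|Ha]; [lra|].
  assert (f a <= fold_right Rplus 0 (map f L)) by (apply IH; auto). lra.
Qed.

Lemma lsum_le_term_nonpos L f a : (forall x, In x L -> f x <= 0) -> In a L -> lsum L f <= f a.
Proof.
  intros H Ha.
  assert (Hopp : -1 * f a <= lsum L (fun x => -1 * f x)).
  { apply (lsum_ge_term L (fun x => -1 * f x)); auto. intros x Hx; specialize (H x Hx); lra. }
  rewrite lsum_scal in Hopp. lra.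
Qed.

Lemma lsum_swap L1 L2 (a : nat -> nat -> R) :
  lsum L1 (fun x => lsum L2 (a x)) = lsum L2 (fun y => lsum L1 (fun x => a x y)).
Proof.
  induction L1 as [|x L1 IH].
  - unfold lsum at 1; simpl. induction L2; unfold lsum in *; simpl in *; [auto|]. lra.
  - change (lsum (x :: L1) ?f) with (f x + lsum L1 f). rewrite IH, <- lsum_plus.
    apply lsum_ext; reflexivity.
Qed.

Lemma lsum_indicator L (p : nat -> bool) :
  lsum L (fun v => if p v then 1 else 0) = INR (length (filter p L)).
Proof.
  unfold lsum; induction L as [|a L IH]; [reflexivity|].
  cbn [map fold_right filter]. rewrite IH.
  destruct (p a); cbn [length]; [rewrite S_INR|]; lra.
Qed.

Lemma sumV_indicator n x :
  sumV n (fun v => if Nat.eqb v x then 1 else 0) = if Nat.ltb x n then 1 else 0.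
Proof.
  induction n as [|n IH]; [reflexivity|].
  rewrite sumV_S, IH.
  destruct (Nat.eqb_spec n x), (Nat.ltb_spec x n), (Nat.ltb_spec x (S n)); lia || lra.
Qed.

(** * Potentials and Kron reduction *)

Definition is_potential (n : nat) (c : nat -> nat -> R) (b phi : nat -> R) : Prop :=
  forall v, (v < n)%nat -> sumV n (fun w => c v w * (phi v - phi w)) = b v.

Lemma reach_last_edge m c x y :
  reach (S m) c x y -> (y < m)%nat -> x = m -> exists z, (z < m)%nat /\ c m z > 0.
Proof.
  induction 1 as [x|x z y Hz Hc _ IH]; intros Hy Hx; [lia|subst].
  destruct (Nat.eq_dec z m) as [->|Hzm]; [auto|].
  exists z; split; [lia|auto].
Qed.

(* Paths of [c] through the last vertex [m] become single edges of [c']. *)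
Lemma reach_shortcut m (c c' : nat -> nat -> R) :
  (forall a z, (a < m)%nat -> (z < m)%nat -> a <> z -> c a z > 0 -> c' a z > 0) ->
  (forall a z, (a < m)%nat -> (z < m)%nat -> a <> z -> c a m > 0 -> c m z > 0 -> c' a z > 0) ->
  forall x y, reach (S m) c x y -> (y < m)%nat ->
    ((x < m)%nat -> reach m c' x y) /\
    (x = m -> exists z, (z < m)%nat /\ c m z > 0 /\ reach m c' z y).
Proof.
  intros Hedge Hpath x y H. induction H as [x|x z y Hz Hc Hr IH]; intros Hy.
  - split; intros; [constructor|lia].
  - destruct (IH Hy) as [IHlt IHm]. split.
    + intros Hx. destruct (Nat.eq_dec z m) as [->|Hzm].
      * destruct (IHm eq_refl) as [z' [Hz' [Hc' Hr']]].
        destruct (Nat.eq_dec x z') as [->|Hne]; [auto|].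
        apply reach_step with z'; auto.
      * destruct (Nat.eq_dec x z) as [->|Hne]; [apply IHlt; lia|].
        apply reach_step with z; [lia|apply Hedge; auto; lia|apply IHlt; lia].
    + intros ->. destruct (Nat.eq_dec z m) as [->|Hzm]; [apply IHm; auto|].
      exists z; repeat split; [lia|auto|apply IHlt; lia].
Qed.

(* Kron reduction: eliminating the last vertex [m] of a network on [S m]
   vertices (the Schur complement of its Laplacian). *)
Definition kron (m : nat) (c : nat -> nat -> R) (a z : nat) : R :=
  if Nat.eqb a z then 0 else c a z + c a m * c m z / cvert m c m.

Definition kron_source (m : nat) (c : nat -> nat -> R) (b : nat -> R) (a : nat) : R :=
  b a + c a m * b m / cvert m c m.

Definition kron_lift (m : nat) (c : nat -> nat -> R) (b phi : nat -> R) (v : nat) : R :=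
  if Nat.eqb v m then (b m + sumV m (fun z => c m z * phi z)) / cvert m c m else phi v.

Section KronReduction.

Variables (m : nat) (c : nat -> nat -> R).
Hypothesis c_network : network (S m) c.
Hypothesis m_pos : (1 <= m)%nat.

Lemma cvert_last_pos : 0 < cvert m c m.
Proof.
  destruct c_network as [_ [Hnn [_ Hconn]]].
  destruct (reach_last_edge m c m 0 (Hconn m 0%nat ltac:(lia) ltac:(lia)) ltac:(lia) eq_refl)
    as [z [Hz Hcz]].
  assert (c m z <= cvert m c m); [|lra].
  unfold cvert; rewrite sumV_lsum.
  apply (lsum_ge_term _ (c m)); [|apply in_seq; lia].
  intros x Hx; apply in_seq in Hx; apply Hnn; lia.
Qed.

Lemma kron_shortcut_nonneg a z : (a < m)%nat -> (z < m)%nat -> 0 <= c a m * c m z / cvert m c m.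
Proof.
  destruct c_network as [_ [Hnn _]]; intros Ha Hz.
  pose proof cvert_last_pos.
  apply Rmult_le_pos; [apply Rmult_le_pos; apply Hnn; lia|].
  apply Rlt_le, Rinv_0_lt_compat; lra.
Qed.

Lemma network_kron : network m (kron m c).
Proof.
  pose proof cvert_last_pos as HD.
  destruct c_network as [Hsym [Hnn [Hdiag Hconn]]]. unfold kron.
  split; [|split; [|split]].
  - intros x y Hx Hy. rewrite Nat.eqb_sym.
    destruct (Nat.eqb y x); [auto|].
    rewrite (Hsym x y), (Hsym x m), (Hsym m y) by lia. lra.
  - intros x y Hx Hy. destruct (Nat.eqb x y); [lra|].
    pose proof (kron_shortcut_nonneg x y Hx Hy). pose proof (Hnn x y ltac:(lia) ltac:(lia)). lra.
  - intros x Hx. rewrite Nat.eqb_refl; auto.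
  - intros x y Hx Hy. apply (reach_shortcut m c); auto.
    + intros a z Ha Hz Hne Hc. apply Nat.eqb_neq in Hne. rewrite Hne.
      pose proof (kron_shortcut_nonneg a z Ha Hz). lra.
    + intros a z Ha Hz Hne H1 H2. apply Nat.eqb_neq in Hne. rewrite Hne.
      assert (0 < c a m * c m z / cvert m c m).
      { apply Rmult_lt_0_compat; [apply Rmult_lt_0_compat; auto|]. apply Rinv_0_lt_compat; lra. }
      pose proof (Hnn a z ltac:(lia) ltac:(lia)). lra.
Qed.

Lemma sumV_kron_source b : sumV (S m) b = 0 -> sumV m (kron_source m c b) = 0.
Proof.
  destruct c_network as [Hsym _]. pose proof cvert_last_pos as HD.
  rewrite sumV_S. intros Hb. unfold kron_source. rewrite !sumV_lsum, lsum_plus.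
  rewrite (lsum_ext _ (fun x => c x m * b m / cvert m c m) (fun x => b m / cvert m c m * c m x)).
  - rewrite lsum_scal, <- !sumV_lsum. change (sumV m (c m)) with (cvert m c m). field_simplify; lra.
  - intros x Hx; apply in_seq in Hx. rewrite Hsym by lia. field; lra.
Qed.

Lemma kron_row_sum f v : (v < m)%nat ->
  sumV m (fun w => kron m c v w * (f v - f w)) =
  sumV m (fun w => c v w * (f v - f w)) +
  c v m / cvert m c m * (f v * cvert m c m - sumV m (fun w => c m w * f w)).
Proof.
  pose proof cvert_last_pos as HD. intros Hv.
  rewrite !sumV_lsum.
  rewrite (lsum_ext _ _ (fun w => c v w * (f v - f w) +
                                  c v m / cvert m c m * (f v * c m w - c m w * f w))).
  - rewrite lsum_plus, lsum_scal, lsum_minus, lsum_scal. reflexivity.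
  - intros w _. unfold kron. destruct (Nat.eqb_spec v w) as [->|]; [ring|]. field; lra.
Qed.

Lemma is_potential_kron_lift b phi :
  is_potential m (kron m c) (kron_source m c b) phi -> is_potential (S m) c b (kron_lift m c b phi).
Proof.
  pose proof cvert_last_pos as HD. destruct c_network as [_ [_ [Hdiag _]]].
  set (D := cvert m c m) in *. set (S0 := sumV m (fun z => c m z * phi z)).
  intros Hphi v Hv. rewrite sumV_S.
  assert (Hlow : forall g : nat -> R -> R,
            sumV m (fun w => g w (kron_lift m c b phi w)) = sumV m (fun w => g w (phi w))).
  { intros g. rewrite !sumV_lsum. apply lsum_ext. intros w Hw; apply in_seq in Hw.
    unfold kron_lift. destruct (Nat.eqb_spec w m); [lia|auto]. }
  rewrite (Hlow (fun w p => c v w * (kron_lift m c b phi v - p))).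
  assert (Hlift_m : kron_lift m c b phi m = (b m + S0) / D)
    by (unfold kron_lift; rewrite Nat.eqb_refl; reflexivity).
  destruct (Nat.eqb_spec v m) as [->|Hvm].
  - rewrite Hlift_m, Hdiag, sumV_lsum by lia.
    rewrite (lsum_ext _ _ (fun w => (b m + S0) / D * c m w - c m w * phi w)) by (intros; ring).
    rewrite lsum_minus, lsum_scal, <- !sumV_lsum.
    change (sumV m (c m)) with D. fold S0. field. lra.
  - assert (Hv' : (v < m)%nat) by lia.
    assert (Hlift_v : kron_lift m c b phi v = phi v)
      by (unfold kron_lift; apply Nat.eqb_neq in Hvm; rewrite Hvm; reflexivity).
    rewrite Hlift_m, Hlift_v.
    pose proof (Hphi v Hv') as Hrow. rewrite kron_row_sum in Hrow by auto.
    unfold kron_source in Hrow. fold D S0 in Hrow.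
    apply (Rmult_eq_reg_l D); [|lra].
    replace (sumV m (fun w => c v w * (phi v - phi w)))
      with (b v + c v m * b m / D - c v m / D * (phi v * D - S0)) by lra.
    field. lra.
Qed.

End KronReduction.

Lemma potential_exists n c b : (1 <= n)%nat -> network n c -> sumV n b = 0 ->
  exists phi, is_potential n c b phi.
Proof.
  revert c b. induction n as [|m IH]; intros c b Hn Hnet Hb; [lia|].
  destruct (Nat.eq_dec m 0) as [->|Hm].
  - exists (fun _ => 0). intros v Hv. replace v with 0%nat in * by lia.
    unfold sumV in *; simpl in *. lra.
  - destruct (IH (kron m c) (kron_source m c b)) as [phi Hphi];
      [lia|apply network_kron; auto; lia|apply sumV_kron_source; auto; lia|].
    exists (kron_lift m c b phi). apply is_potential_kron_lift; auto; lia.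
Qed.

(** * Effective resistance *)

Definition unit_current (x y v : nat) : R :=
  (if Nat.eqb v x then 1 else 0) - (if Nat.eqb v y then 1 else 0).

Lemma Reff_spec n c x y : network n c -> (x < n)%nat -> (y < n)%nat ->
  exists phi, is_potential n c (unit_current x y) phi /\ Reff n c x y = phi x - phi y.
Proof.
  intros Hnet Hx Hy. unfold Reff. apply epsilon_spec.
  destruct (potential_exists n c (unit_current x y)) as [phi Hphi]; auto; [lia| |].
  - unfold unit_current. rewrite sumV_lsum, lsum_minus, <- !sumV_lsum, !sumV_indicator.
    apply Nat.ltb_lt in Hx, Hy. rewrite Hx, Hy. lra.
  - exists (phi x - phi y), phi. auto.
Qed.

Lemma Reff_diag n c x : network n c -> (x < n)%nat -> Reff n c x x = 0.
Proof. intros Hnet Hx. destruct (Reff_spec n c x x Hnet Hx Hx) as [phi [_ ->]]. lra. Qed.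

Lemma cvert_nonneg n c v : network n c -> (v < n)%nat -> 0 <= cvert n c v.
Proof.
  intros [_ [Hnn _]] Hv. apply lsum_nonneg.
  intros x Hx; apply in_seq in Hx; apply Hnn; lia.
Qed.

Lemma exists_argmin (phi : nat -> R) n : (1 <= n)%nat ->
  exists m, (m < n)%nat /\ forall z, (z < n)%nat -> phi m <= phi z.
Proof.
  induction n as [|n IH]; intros Hn; [lia|].
  destruct (Nat.eq_dec n 0) as [->|Hn0].
  - exists 0%nat. split; [lia|]. intros z Hz. replace z with 0%nat by lia. lra.
  - destruct IH as [m [Hm Hmin]]; [lia|].
    destruct (Rle_dec (phi m) (phi n)).
    + exists m. split; [lia|]. intros z Hz.
      destruct (Nat.eq_dec z n) as [->|]; [auto|apply Hmin; lia].
    + exists n. split; [lia|]. intros z Hz.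
      destruct (Nat.eq_dec z n) as [->|]; [lra|]. specialize (Hmin z ltac:(lia)). lra.
Qed.

(* Minimum principle: the set of minimisers is closed under edges leaving any
   vertex other than [w], and the network is connected. *)
Lemma potential_min_at n c b phi w : network n c -> is_potential n c b phi -> (w < n)%nat ->
  (forall x, (x < n)%nat -> x <> w -> 0 <= b x) ->
  forall z, (z < n)%nat -> phi w <= phi z.
Proof.
  intros Hnet Hphi Hw Hb. pose proof Hnet as [_ [Hnn [_ Hconn]]].
  set (is_min := fun x => forall z, (z < n)%nat -> phi x <= phi z).
  assert (Hspread : forall x z, (x < n)%nat -> (z < n)%nat -> x <> w -> c x z > 0 ->
                    is_min x -> is_min z).
  { intros x z Hx Hz Hxw Hcxz Hmin.
    assert (Hterms : forall t, In t (seq 0 n) -> c x t * (phi x - phi t) <= 0).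
    { intros t Ht; apply in_seq in Ht. specialize (Hmin t ltac:(lia)).
      specialize (Hnn x t Hx ltac:(lia)). nra. }
    pose proof (lsum_le_term_nonpos _ _ z Hterms ltac:(apply in_seq; lia)) as Hle.
    rewrite <- sumV_lsum, (Hphi x Hx) in Hle. specialize (Hb x Hx Hxw).
    intros t Ht. specialize (Hmin t Ht). nra. }
  assert (Hreach : forall x y, reach n c x y -> (x < n)%nat -> is_min x -> is_min w \/ is_min y).
  { induction 1 as [x|x z y Hz Hcxz _ IH]; intros Hx Hmin; [auto|].
    destruct (Nat.eq_dec x w) as [->|Hxw]; [auto|].
    apply IH; [auto|]. apply (Hspread x z); auto. }
  destruct (exists_argmin phi n ltac:(lia)) as [m [Hm Hmin]].
  destruct (Hreach m w (Hconn m w Hm Hw) Hm Hmin); auto.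
Qed.

Lemma cvert_Reff_ge1 n c v w : network n c -> (v < n)%nat -> (w < n)%nat -> v <> w ->
  1 <= cvert n c v * Reff n c v w.
Proof.
  intros Hnet Hv Hw Hvw. pose proof Hnet as [_ [Hnn _]].
  destruct (Reff_spec n c v w Hnet Hv Hw) as [phi [Hphi ->]].
  assert (Hwmin := potential_min_at n c _ phi w Hnet Hphi Hw).
  assert (Hsrc : forall x, (x < n)%nat -> x <> w -> 0 <= unit_current v w x).
  { intros x _ Hxw. unfold unit_current.
    destruct (Nat.eqb_spec x w); [congruence|]. destruct (Nat.eqb x v); lra. }
  specialize (Hwmin Hsrc).
  assert (Hv1 : unit_current v w v = 1).
  { unfold unit_current. rewrite Nat.eqb_refl. destruct (Nat.eqb_spec v w); [congruence|lra]. }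
  rewrite <- Hv1, <- (Hphi v Hv). unfold cvert. rewrite !sumV_lsum, Rmult_comm, <- lsum_scal.
  apply lsum_le. intros t Ht; apply in_seq in Ht.
  specialize (Hwmin t ltac:(lia)). specialize (Hnn v t Hv ltac:(lia)). nra.
Qed.

Lemma cvert_pos_dist_sqrtReff_sq n c v w : network n c -> (v < n)%nat -> (w < n)%nat -> v <> w ->
  0 < cvert n c v /\ dist_sqrtReff n c v w ^ 2 = Reff n c v w.
Proof.
  intros Hnet Hv Hw Hvw.
  pose proof (cvert_Reff_ge1 n c v w Hnet Hv Hw Hvw). pose proof (cvert_nonneg n c v Hnet Hv).
  assert (Hpos : 0 < cvert n c v /\ 0 < Reff n c v w).
  { destruct (Rle_dec (Reff n c v w) 0); [nra|].
    destruct (Rle_dec (cvert n c v) 0); [nra|lra]. }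
  split; [tauto|]. unfold dist_sqrtReff. rewrite pow2_sqrt; lra.
Qed.

(** * Admissible sequences and [γ₂] *)

Lemma diam_ge0 d B : 0 <= diam d B.
Proof.
  unfold diam. induction (map _ _); simpl; [lra|].
  apply Rle_trans with (1 := IHl), Rmax_r.
Qed.

Lemma diam_ge d B x y : In x B -> In y B -> d x y <= diam d B.
Proof.
  intros Hx Hy. unfold diam.
  assert (Hin : In (d x y) (map (fun p => d (fst p) (snd p)) (list_prod B B)))
    by (apply (in_map (fun p => d (fst p) (snd p)) _ (x, y)), in_prod; auto).
  induction (map _ _); simpl in *; [tauto|].
  destruct Hin as [->|Hin]; [apply Rmax_l|].
  apply Rle_trans with (1 := IHl Hin), Rmax_r.
Qed.

Lemma diam_le d B M : 0 <= M -> (forall x y, In x B -> In y B -> d x y <= M) -> diam d B <= M.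
Proof.
  intros HM Hd. unfold diam.
  assert (Hall : forall a, In a (map (fun p => d (fst p) (snd p)) (list_prod B B)) -> a <= M).
  { intros a Ha. apply in_map_iff in Ha as [[x y] [<- Hxy]].
    apply in_prod_iff in Hxy. apply Hd; tauto. }
  induction (map _ _); simpl in *; [auto|].
  apply Rmax_lub; auto.
Qed.

Lemma In_block n Q x y : In y (block n Q x) <-> (y < n)%nat /\ Q y = Q x.
Proof.
  unfold block. rewrite filter_In, in_seq, Nat.eqb_eq. lia.
Qed.

Lemma pigeonhole_block n (Q : nat -> nat) T :
  NoDup T -> (forall v, In v T -> (v < n)%nat) -> (num_blocks n Q < length T)%nat ->
  exists v w, In v T /\ In w T /\ v <> w /\ Q v = Q w.
Proof.
  intros HT Hn Hlen. apply NNPP. intros Hno.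
  assert (Hinj : NoDup (map Q T)).
  { apply NoDup_map_NoDup_ForallPairs; auto.
    intros a b Ha Hb Hab. apply NNPP. intros Hne. apply Hno. exists a, b. auto. }
  assert (Hincl : (length (map Q T) <= num_blocks n Q)%nat).
  { apply NoDup_incl_length; auto. intros q Hq. apply nodup_In.
    apply in_map_iff in Hq as [a [<- Ha]]. apply in_map, in_seq. specialize (Hn a Ha). lia. }
  rewrite length_map in Hincl. lia.
Qed.

Lemma Mk_pos k : (1 <= Mk k)%nat.
Proof. destruct k; [simpl; lia|]. unfold Mk. pose proof (Nat.pow_nonzero 2 (2 ^ S k)). lia. Qed.

Lemma Mk_le_S k : (Mk k <= Mk (S k))%nat.
Proof.
  destruct k; [simpl; lia|]. unfold Mk.
  apply Nat.pow_le_mono_r; [lia|]. apply Nat.pow_le_mono_r; lia.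
Qed.

Lemma Mk_gt k : (k < Mk k)%nat.
Proof.
  destruct k; [simpl; lia|]. unfold Mk.
  pose proof (Nat.pow_gt_lin_r 2 (S k)). pose proof (Nat.pow_gt_lin_r 2 (2 ^ S k)). lia.
Qed.

(* The partition [A_k] = {{0}, ..., {M_k - 2}, {x >= M_k - 1}}: its blocks on
   [{0, ..., n-1}] are singletons once [k >= n], since [k < M_k]. *)
Definition capped_partition (k x : nat) : nat := Nat.min x (Mk k - 1).

Lemma admissible_capped_partition n : admissible n capped_partition.
Proof.
  split.
  - intros k. unfold num_blocks. rewrite <- (length_seq (Mk k) 0).
    apply NoDup_incl_length; [apply NoDup_nodup|]. intros a Ha.
    apply nodup_In, in_map_iff in Ha as [x [<- _]]. apply in_seq.
    unfold capped_partition. pose proof (Mk_pos k). lia.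
  - intros k x y _ _. unfold capped_partition. pose proof (Mk_le_S k). lia.
Qed.

Definition sqrt2_pow (k : nat) : R := Rpower 2 (INR k / 2).

Lemma sqrt2_pow_pos k : 0 < sqrt2_pow k.
Proof. apply exp_pos. Qed.

Lemma sqrt2_pow_sq k : sqrt2_pow k ^ 2 = 2 ^ k.
Proof.
  unfold sqrt2_pow. simpl. rewrite Rmult_1_r, <- Rpower_plus.
  replace (INR k / 2 + INR k / 2) with (INR k) by field. apply Rpower_pow; lra.
Qed.

Lemma sumV_le_length g a b : (forall k, 0 <= g k) -> (a <= b)%nat -> sumV a g <= sumV b g.
Proof.
  intros Hg Hab. induction Hab; [lra|]. rewrite sumV_S. specialize (Hg m). lra.
Qed.

Lemma sumV_le_of_vanishing f g n M : (forall k, 0 <= g k) ->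
  (forall k, (k < n)%nat -> f k <= g k) -> (forall k, (n <= k)%nat -> f k <= 0) ->
  sumV M f <= sumV n g.
Proof.
  intros Hg Hlow Hhigh.
  assert (Hmin : forall M, sumV M f <= sumV (Nat.min M n) g).
  { clear M. intros M. induction M as [|M IH]; [unfold sumV; simpl; lra|]. rewrite sumV_S.
    destruct (Nat.lt_ge_cases M n) as [HM|HM].
    - replace (Nat.min (S M) n) with (S (Nat.min M n)) by lia.
      rewrite sumV_S. replace (Nat.min M n) with M in * by lia. specialize (Hlow M HM). lra.
    - replace (Nat.min (S M) n) with (Nat.min M n) by lia. specialize (Hhigh M HM). lra. }
  eapply Rle_trans; [apply Hmin|]. apply sumV_le_length; auto; lia.
Qed.

Lemma gamma_partial_ge_term n d P x k :
  sqrt2_pow k * diam d (block n (P k) x) <= gamma_partial n d P x k.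
Proof.
  apply (lsum_ge_term (seq 0 (S k)) (fun j => sqrt2_pow j * diam d (block n (P j) x)) k).
  - intros j _. apply Rmult_le_pos; [apply Rlt_le, sqrt2_pow_pos|apply diam_ge0].
  - apply in_seq; lia.
Qed.

Section Gamma2.

Variables (n : nat) (d : nat -> nat -> R).
Hypothesis d_nonneg : forall x y, 0 <= d x y.
Hypothesis d_refl : forall x, (x < n)%nat -> d x x = 0.
Hypothesis n_pos : (1 <= n)%nat.

Lemma gamma2_bounds_nonneg t : gamma2_bounds n d t -> 0 <= t.
Proof.
  intros [P [_ HP]]. specialize (HP 0%nat 0%nat n_pos).
  pose proof (gamma_partial_ge_term n d P 0 0).
  pose proof (sqrt2_pow_pos 0). pose proof (diam_ge0 d (block n (P 0%nat) 0)). nra.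
Qed.

Lemma gamma2_bounds_exists : exists t, gamma2_bounds n d t.
Proof.
  set (D := diam d (seq 0 n)).
  exists (sumV n (fun k => sqrt2_pow k * D)), capped_partition.
  split; [apply admissible_capped_partition|]. intros x N Hx.
  change (gamma_partial n d capped_partition x N)
    with (sumV (S N) (fun k => sqrt2_pow k * diam d (block n (capped_partition k) x))).
  apply sumV_le_of_vanishing.
  - intros k. apply Rmult_le_pos; [apply Rlt_le, sqrt2_pow_pos|apply diam_ge0].
  - intros k _. apply Rmult_le_compat_l; [apply Rlt_le, sqrt2_pow_pos|].
    apply diam_le; [apply diam_ge0|]. intros y z Hy Hz.
    apply In_block in Hy, Hz. apply diam_ge; apply in_seq; lia.
  - intros k Hk. pose proof (sqrt2_pow_pos k).
    assert (diam d (block n (capped_partition k) x) <= 0); [|nra].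
    apply diam_le; [lra|]. intros y z Hy Hz.
    apply In_block in Hy, Hz. unfold capped_partition in Hy, Hz. pose proof (Mk_gt k).
    replace y with x by lia. replace z with x by lia. rewrite d_refl by exact Hx; lra.
Qed.

Lemma gamma2_is_glb : is_glb (gamma2_bounds n d) (gamma2 n d).
Proof.
  unfold gamma2. apply epsilon_spec.
  destruct gamma2_bounds_exists as [t0 Ht0].
  destruct (completeness (fun s => gamma2_bounds n d (- s))) as [m [Hub Hlub]].
  - exists 0. intros s Hs. apply gamma2_bounds_nonneg in Hs. lra.
  - exists (- t0). rewrite Ropp_involutive. auto.
  - exists (- m). split.
    + intros t Ht. assert (- t <= m) by (apply Hub; rewrite Ropp_involutive; auto). lra.
    + intros b Hb. assert (m <= - b); [|lra].
      apply Hlub. intros s Hs. specialize (Hb _ Hs). lra.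
Qed.

End Gamma2.

Lemma sqrt2_pow_dist_le P t k v w n d :
  (forall x N, (x < n)%nat -> gamma_partial n d P x N <= t) ->
  (v < n)%nat -> (w < n)%nat -> P k v = P k w -> sqrt2_pow k * d v w <= t.
Proof.
  intros Ht Hv Hw Hvw. eapply Rle_trans; [|apply (Ht v k Hv)].
  eapply Rle_trans; [|apply gamma_partial_ge_term].
  apply Rmult_le_compat_l; [apply Rlt_le, sqrt2_pow_pos|].
  apply diam_ge; apply In_block; auto.
Qed.

Definition Rleb (a b : R) : bool := if Rle_dec a b then true else false.

Definition sublevel (n : nat) (x : nat -> R) (a : R) : list nat :=
  filter (fun v => Rleb (x v) a) (seq 0 n).

Definition scaled_cvert (n : nat) (c : nat -> nat -> R) (v : nat) : R :=
  cvert n c v * gamma2 n (dist_sqrtReff n c) ^ 2.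

Lemma gamma2_sqrtReff_glb n c : network n c -> (1 <= n)%nat ->
  is_glb (gamma2_bounds n (dist_sqrtReff n c)) (gamma2 n (dist_sqrtReff n c)).
Proof.
  intros Hnet Hn.
  assert (Hrefl : forall x, (x < n)%nat -> dist_sqrtReff n c x x = 0).
  { intros x Hx. unfold dist_sqrtReff. rewrite Reff_diag by auto. apply sqrt_0. }
  apply gamma2_is_glb; auto using sqrt_pos.
Qed.

Lemma scaled_cvert_ge1 n c v : network n c -> (2 <= n)%nat -> (v < n)%nat ->
  1 <= scaled_cvert n c v.
Proof.
  unfold scaled_cvert.
  intros Hnet Hn Hv. set (g := gamma2 n (dist_sqrtReff n c)).
  set (w := if Nat.eqb v 0 then 1%nat else 0%nat).
  assert (Hw : (w < n)%nat) by (unfold w; destruct (Nat.eqb v 0); lia).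
  assert (Hvw : v <> w) by (unfold w; destruct (Nat.eqb_spec v 0); lia).
  assert (Hd : dist_sqrtReff n c v w <= g).
  { apply (gamma2_sqrtReff_glb n c Hnet ltac:(lia)). intros t [P [[Hnb _] Ht]].
    assert (Hblock : P 0%nat v = P 0%nat w).
    { destruct (pigeonhole_block n (P 0%nat) [v; w]) as [a [b [Ha [Hb [Hab HQ]]]]].
      - constructor; [simpl; intros [Hwv|[]]; congruence|repeat constructor; simpl; tauto].
      - intros u Hu. simpl in Hu. destruct Hu as [<-|[<-|[]]]; auto.
      - specialize (Hnb 0%nat). simpl in *. lia.
      - simpl in Ha, Hb. destruct Ha as [<-|[<-|[]]], Hb as [<-|[<-|[]]]; congruence. }
    pose proof (sqrt2_pow_dist_le P t 0 v w n _ Ht Hv Hw Hblock) as Hle.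
    unfold sqrt2_pow in Hle. simpl in Hle. rewrite Rdiv_0_l, Rpower_O in Hle; lra. }
  destruct (cvert_pos_dist_sqrtReff_sq n c v w Hnet Hv Hw Hvw) as [Hc Hsq].
  pose proof (cvert_Reff_ge1 n c v w Hnet Hv Hw Hvw).
  pose proof (sqrt_pos (Reff n c v w)). fold (dist_sqrtReff n c v w) in *.
  assert (Reff n c v w <= g ^ 2) by nra. nra.
Qed.

Lemma gamma2_sqrtReff_pos n c : network n c -> (2 <= n)%nat ->
  0 < gamma2 n (dist_sqrtReff n c).
Proof.
  intros Hnet Hn. set (g := gamma2 n (dist_sqrtReff n c)).
  pose proof (scaled_cvert_ge1 n c 0 Hnet Hn ltac:(lia)) as H1.
  unfold scaled_cvert in H1. fold g in H1.
  assert (0 <= g).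
  { apply (gamma2_sqrtReff_glb n c Hnet ltac:(lia)). intros t Ht.
    apply (gamma2_bounds_nonneg n (dist_sqrtReff n c)); auto; lia. }
  destruct (Req_dec g 0) as [Hg0|]; [rewrite Hg0 in H1; simpl in H1; lra|lra].
Qed.

Lemma sublevel_length_le n c k : network n c -> (2 <= n)%nat ->
  (length (sublevel n (scaled_cvert n c) (2 ^ k)%R) <= Mk (S k))%nat.
Proof.
  intros Hnet Hn. set (g := gamma2 n (dist_sqrtReff n c)). set (d := dist_sqrtReff n c).
  set (T := sublevel n (scaled_cvert n c) (2 ^ k)).
  destruct (Nat.le_gt_cases (length T) (Mk (S k))) as [|Hlong]; [auto|exfalso].
  pose proof (gamma2_sqrtReff_pos n c Hnet Hn) as Hg. fold g in Hg.
  assert (Hs2 : 1 < sqrt 2 /\ sqrt 2 ^ 2 = 2).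
  { rewrite pow2_sqrt by lra. split; [|auto]. rewrite <- sqrt_1. apply sqrt_lt_1; lra. }
  assert (Hge : sqrt 2 * g <= g); [|nra].
  apply (gamma2_sqrtReff_glb n c Hnet ltac:(lia)). intros t [P [[Hnb _] Ht]].
  destruct (pigeonhole_block n (P (S k)) T) as [v [w [Hv [Hw [Hvw HQ]]]]].
  - apply NoDup_filter, seq_NoDup.
  - intros v Hv. apply filter_In, proj1, in_seq in Hv. lia.
  - specialize (Hnb (S k)). lia.
  - apply filter_In in Hv as [Hv Hsmall], Hw as [Hw _]. apply in_seq in Hv, Hw.
    unfold Rleb, scaled_cvert in Hsmall. fold g in Hsmall.
    destruct Rle_dec as [Hlevel|]; [clear Hsmall|discriminate].
    pose proof (sqrt2_pow_dist_le P t (S k) v w n d Ht ltac:(lia) ltac:(lia) HQ) as Hle.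
    destruct (cvert_pos_dist_sqrtReff_sq n c v w Hnet ltac:(lia) ltac:(lia) Hvw) as [Hc Hsq].
    pose proof (cvert_Reff_ge1 n c v w Hnet ltac:(lia) ltac:(lia) Hvw).
    set (X := sqrt2_pow (S k) * d v w) in *.
    assert (HX0 : 0 <= X) by (apply Rmult_le_pos; [apply Rlt_le, sqrt2_pow_pos|apply sqrt_pos]).
    assert (HX2 : 2 * g ^ 2 <= X ^ 2).
    { unfold X. rewrite Rpow_mult_distr, sqrt2_pow_sq. fold d in Hsq. rewrite Hsq.
      simpl pow. nra. }
    nra.
Qed.

(** * Dyadic summation *)

Lemma exp_le_mono a b : a <= b -> exp a <= exp b.
Proof. intros [Hlt | ->]; [left; apply exp_increasing; auto|lra]. Qed.

Lemma INR_le_pow2 N : INR N <= 2 ^ N.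
Proof.
  induction N as [|N IH]; [simpl; lra|]. rewrite S_INR. simpl.
  pose proof (pow_R1_Rle 2 N ltac:(lra)). lra.
Qed.

Lemma dyadic_level N y : 1 <= y -> y <= 2 ^ N ->
  exists k, (k <= N)%nat /\ 2 ^ k / 2 <= y <= 2 ^ k.
Proof.
  induction N as [|N IH]; intros H1 H2.
  - exists 0%nat. simpl in *. split; [lia|lra].
  - destruct (Rle_dec y (2 ^ N)) as [Hle|Hgt].
    + destruct (IH H1 Hle) as [k [Hk Hy]]. exists k. split; [lia|auto].
    + exists (S N). simpl in *. split; [lia|lra].
Qed.

Lemma exp_le_dyadic_sum u y N : 0 <= u -> 1 <= y -> y <= 2 ^ N ->
  exp (- (u * y)) <=
  lsum (seq 0 (S N)) (fun k => (if Rleb y (2 ^ k) then 1 else 0) * exp (- (u * 2 ^ k / 2))).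
Proof.
  intros Hu H1 H2. destruct (dyadic_level N y H1 H2) as [k [Hk [Hlo Hhi]]].
  set (term := fun k => (if Rleb y (2 ^ k) then 1 else 0) * exp (- (u * 2 ^ k / 2))).
  eapply Rle_trans; [|apply (lsum_ge_term _ term k)]; unfold term.
  - unfold Rleb. destruct Rle_dec; [|contradiction]. rewrite Rmult_1_l.
    apply exp_le_mono. assert (0 <= u * (y - 2 ^ k / 2)) by (apply Rmult_le_pos; lra). lra.
  - intros j _. apply Rmult_le_pos; [destruct Rleb; lra|apply Rlt_le, exp_pos].
  - apply in_seq; lia.
Qed.

Lemma Mk_S_exp u k :
  INR (Mk (S k)) * exp (- (u * 2 ^ k / 2)) = (4 * exp (- u / 2)) ^ (2 ^ k).
Proof.
  assert (Hexp : forall a m, exp (a * INR m) = exp a ^ m).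
  { intros a m. induction m as [|m IH]; [simpl; rewrite Rmult_0_r, exp_0; auto|].
    rewrite S_INR, Rmult_plus_distr_l, Rmult_1_r, exp_plus, IH. simpl. ring. }
  unfold Mk. rewrite Nat.pow_succ_r', Nat.pow_mul_r, pow_INR, Rpow_mult_distr.
  replace (2 ^ k) with (INR (2 ^ k)) by (rewrite pow_INR; f_equal; simpl; lra).
  replace (- (u * INR (2 ^ k) / 2)) with (- u / 2 * INR (2 ^ k)) by field.
  rewrite Hexp. replace (INR (2 ^ 2)) with 4 by (simpl; lra). reflexivity.
Qed.

Lemma pow_pow2_le a k : 0 <= a <= 1 / 2 -> a ^ (2 ^ k) <= a * (1 / 2) ^ k.
Proof.
  intros Ha. induction k as [|k IH]; [simpl; lra|].
  rewrite Nat.pow_succ_r', Nat.mul_comm, pow_mult. simpl. rewrite Rmult_1_r.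
  assert (Hh : 0 <= (1 / 2) ^ k <= 1).
  { split; [apply pow_le; lra|]. rewrite <- (pow1 k) at 2. apply pow_incr. lra. }
  assert (0 <= a ^ (2 ^ k)) by (apply pow_le; lra).
  assert (a * (1 / 2) ^ k <= 1 / 2) by nra. nra.
Qed.

Lemma geometric_half_le N : lsum (seq 0 N) (fun k => (1 / 2) ^ k) <= 2.
Proof.
  assert (Hsum : lsum (seq 0 N) (fun k => (1 / 2) ^ k) = 2 - 2 * (1 / 2) ^ N).
  { induction N as [|N IH]; [unfold lsum; simpl; lra|].
    rewrite <- sumV_lsum, sumV_S, sumV_lsum, IH. simpl. lra. }
  rewrite Hsum. pose proof (pow_le (1 / 2) N ltac:(lra)). lra.
Qed.

Lemma four_exp_neg_half_le u : 16 <= u -> 4 * exp (- u / 2) <= 1 / 2.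
Proof.
  intros Hu. pose proof (exp_ineq1_le 8). pose proof (exp_pos 8).
  assert (exp (- u / 2) <= / exp 8).
  { rewrite <- exp_Ropp. apply exp_le_mono. lra. }
  assert (/ exp 8 <= / 9) by (apply Rinv_le_contravar; lra). lra.
Qed.

Lemma sum_exp_sublevels n x u : 16 <= u -> (forall v, (v < n)%nat -> 1 <= x v) ->
  (forall k, (length (sublevel n x (2 ^ k)%R) <= Mk (S k))%nat) ->
  sumV n (fun v => exp (- (u * x v))) <= 8 * exp (- u / 2).
Proof.
  intros Hu Hx Hcount.
  set (q := exp (- u / 2)). set (e := fun k => exp (- (u * 2 ^ k / 2))).
  assert (Hq : 0 <= 4 * q <= 1 / 2).
  { pose proof (exp_pos (- u / 2)). pose proof (four_exp_neg_half_le u Hu). unfold q; lra. }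
  destruct (INR_unbounded (sumV n x)) as [N HN].
  assert (HxN : forall v, (v < n)%nat -> x v <= 2 ^ N).
  { intros v Hv. pose proof (INR_le_pow2 N).
    assert (x v <= sumV n x); [|lra].
    apply (lsum_ge_term (seq 0 n) x); [|apply in_seq; lia].
    intros y Hy. apply in_seq in Hy. specialize (Hx y ltac:(lia)). lra. }
  apply Rle_trans with
    (lsum (seq 0 (S N)) (fun k => e k * INR (length (sublevel n x (2 ^ k))))).
  { rewrite sumV_lsum.
    eapply Rle_trans; [apply lsum_le; intros v Hv; apply in_seq in Hv;
                       apply (exp_le_dyadic_sum u (x v) N); [lra|apply Hx; lia|apply HxN; lia]|].
    rewrite lsum_swap. right. apply lsum_ext. intros k _.
    rewrite (lsum_ext _ _ (fun v => e k * (if Rleb (x v) (2 ^ k) then 1 else 0)))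
      by (intros; unfold e; ring).
    rewrite lsum_scal, lsum_indicator. reflexivity. }
  apply Rle_trans with (lsum (seq 0 (S N)) (fun k => 4 * q * (1 / 2) ^ k)).
  { apply lsum_le. intros k _.
    eapply Rle_trans; [|apply pow_pow2_le; exact Hq].
    unfold q. rewrite <- Mk_S_exp. fold (e k). rewrite Rmult_comm.
    apply Rmult_le_compat_r; [apply Rlt_le, exp_pos|]. apply le_INR, Hcount. }
  rewrite lsum_scal. replace (8 * q) with (4 * q * 2) by ring.
  apply Rmult_le_compat_l; [lra|apply geometric_half_le].
Qed.

Theorem mainTheorem12 :
  exists K : R,
    forall (n : nat) (c : nat -> nat -> R),
      (2 <= n)%nat -> network n c ->
      forall u : R, 16 <= u ->
        sumV n (fun v => exp (- (u * cvert n c v * (gamma2 n (dist_sqrtReff n c)) ^ 2)))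
        <= K * exp (- u / 8).
Proof.
  exists 8. intros n c Hn Hnet u Hu.
  rewrite sumV_lsum, (lsum_ext _ _ (fun v => exp (- (u * scaled_cvert n c v))))
    by (intros; unfold scaled_cvert; rewrite Rmult_assoc; reflexivity).
  eapply Rle_trans; [apply sum_exp_sublevels; auto|].
  - intros v Hv. apply scaled_cvert_ge1; auto.
  - intros k. apply sublevel_length_le; auto.
  - apply Rmult_le_compat_l; [lra|]. apply exp_le_mono. lra.
Qed.
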